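(* Let $K$ be a convex set (in some real vector space). Let $\mathcal{D}(K)$ be the collection of all finite ensembles over $K$, regarded as a test space with outcome set $X(K)=(0,1]\times K$. Then the only probability weight on $\mathcal{D}(K)$ is the function $\rho:(0,1]\times K\to[0,1]$ given by $\rho((t,\alpha))=t$.
   Context: A finite ensemble over $K$ is a finite set of pairs $\{(t_1,\alpha_1),\dots,(t_n,\alpha_n)\}$ with $\alpha_i\in K$, $t_i\in(0,1]$ and $\sum_{i=1}^n t_i=1$. A probability weight on a collection $\mathcal{M}$ of sets (a test space) with $X=\bigcup\mathcal{M}$ is a function $f:X\to[0,1]$ such that $\sum_{x\in E}f(x)=1$ for every $E\in\mathcal{M}$. *)

From HB Require Import structures.
From mathcomp Require Import all_boot all_order all_algebra.
From mathcomp Require Import finmap.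
From mathcomp Require Import boolp classical_sets reals convex.
Set Implicit Arguments. Unset Strict Implicit. Unset Printing Implicit Defensive.
Import Order.TTheory GRing.Theory Num.Theory.
Local Open Scope ring_scope.

Definition outcome (R : realType) (V : lmodType R) (K : set V) (x : R * V) : Prop :=
  (0 < x.1 <= 1) /\ K x.2.

Definition ensemble (R : realType) (V : lmodType R) (K : set V)
    (E : {fset (R * V)}) : Prop :=
  (forall x, x \in E -> outcome K x) /\ \sum_(x <- E) x.1 = 1.

(* Probability weight on the test space D(K) (all finite ensembles),
   with outcome set X(K) = (0,1] x K. Only values on X(K) are constrained. *)
Definition prob_weight (R : realType) (V : lmodType R) (K : set V)
    (f : R * V -> R) : Prop :=
  (forall x, outcome K x -> 0 <= f x <= 1) /\
  (forall E, ensemble K E -> \sum_(x <- E) f x = 1).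

(* Fix alpha in K and put g t := f (t, alpha).  Ensembles are sets, so those
   supported on alpha give g t_1 + ... + g t_n = 1 only for DISTINCT t_i > 0
   summing to 1.  For s = t_1 + ... + t_n < 1, padding with two fresh distinct
   weights u_1 + u_2 = 1 - s and comparing {t_1, ..., t_n, u_1, u_2} with
   {s, u_1, u_2} gives g t_1 + ... + g t_n = g s, hence additivity of g on
   (0,1].  An additive g with g >= 0 and g 1 = 1 is monotone and satisfies
   g (k/N) = k/N, so squeezing between fractions yields g t = t. *)
From HB Require Import structures.
From mathcomp Require Import all_boot all_order all_algebra.
From mathcomp Require Import finmap.
From mathcomp Require Import boolp classical_sets reals convex.
From mathcomp Require Import lra.

Set Implicit Arguments.
Unset Strict Implicit.
Unset Printing Implicit Defensive.
Import Order.TTheory GRing.Theory Num.Theory.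
Local Open Scope ring_scope.

Lemma exists_gt0_notin (R : realType) (B : seq R) :
  exists2 e : R, 0 < e & forall x, 0 < x < e -> x \notin B.
Proof.
elim: B => [|b B [e e_gt0 eB]]; first by exists 1.
have [b_gt0 | b_le0] := ltP 0 b.
- exists (Num.min e b); first by rewrite lt_min e_gt0.
  move=> x /andP[x_gt0]; rewrite lt_min => /andP[xe xb].
  by rewrite inE negb_or eB ?x_gt0 // lt_eqF.
- exists e => // x /andP[x_gt0 xe]; rewrite inE negb_or eB ?x_gt0 // andbT.
  by rewrite gt_eqF // (le_lt_trans b_le0).
Qed.

Lemma split_notin (R : realType) (B : seq R) (r : R) : 0 < r ->
  exists u1 u2 : R, [/\ 0 < u1 < u2, u1 + u2 = r, u1 \notin B & u2 \notin B].
Proof.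
move=> r_gt0.
have [e e_gt0 eB] := exists_gt0_notin (B ++ map (fun b => r - b) B).
set m := Num.min e (r / 2).
have m_gt0 : 0 < m by rewrite lt_min e_gt0 divr_gt0.
have [me mr] : m <= e /\ m <= r / 2 by rewrite !ge_min !lexx ?orbT.
have /eB : 0 < m / 2 < e by apply/andP; split; lra.
rewrite mem_cat negb_or => /andP[u1B u1rB].
exists (m / 2), (r - m / 2); split=> //; first (apply/andP; split; lra); first lra.
apply: contra u1rB => u2B; apply/mapP; exists (r - m / 2) => //.
by rewrite opprB addrC subrK.
Qed.

Section ProbWeight.

Variables (R : realType) (V : lmodType R) (K : set V) (f : R * V -> R).
Hypothesis hf : prob_weight K f.

Lemma prob_weight_sum_seq (s : seq (R * V)) :
  uniq s -> {in s, forall x, outcome K x} -> \sum_(x <- s) x.1 = 1 ->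
  \sum_(x <- s) f x = 1.
Proof.
move=> s_uniq sK s1.
have s_perm : perm_eq (seq_fset tt s) s.
  by rewrite (permPl (seq_fset_perm _ _)) undup_id.
rewrite -(perm_big _ s_perm); apply: hf.2; split.
- by move=> x; rewrite seq_fsetE; exact: sK.
- by rewrite (perm_big _ s_perm).
Qed.

Variables (a : V) (Ka : K a).

Lemma weight_ge0 (t : R) : 0 < t <= 1 -> 0 <= f (t, a).
Proof. by move=> t01; have /andP[] := hf.1 (t, a) (conj t01 Ka). Qed.

Lemma sum_weight_atom_eq1 (s : seq R) :
  uniq s -> {in s, forall u, 0 < u} -> \sum_(u <- s) u = 1 ->
  \sum_(u <- s) f (u, a) = 1.
Proof.
move=> s_uniq s_gt0 s1.
rewrite -(big_map (fun u => (u, a)) xpredT f); apply: prob_weight_sum_seq.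
- by rewrite map_inj_uniq // => u v [].
- move=> _ /mapP[u us ->]; split=> //=; rewrite s_gt0 //= -s1.
  rewrite (bigD1_seq u) //= lerDl big_seq_cond sumr_ge0 // => v /andP[vs _].
  exact/ltW/s_gt0.
- by rewrite big_map.
Qed.

Lemma weight1 : f (1, a) = 1.
Proof.
by rewrite -[RHS](sum_weight_atom_eq1 (s := [:: 1])) ?big_seq1 // => u /[!inE] /eqP->.
Qed.

Lemma sum_weight_atom (s : seq R) :
  uniq s -> {in s, forall u, 0 < u} ->
  0 < \sum_(u <- s) u <= 1 ->
  \sum_(u <- s) f (u, a) = f (\sum_(u <- s) u, a).
Proof.
set σ := \sum_(u <- s) u => s_uniq s_gt0 /andP[σ_gt0].
rewrite le_eqVlt => /orP[/eqP σ1 | σ_lt1].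
  by rewrite σ1 weight1 sum_weight_atom_eq1.
have r_gt0 : 0 < 1 - σ by rewrite subr_gt0.
have [u1 [u2 [/andP[u1_gt0 u12] u12_sum]]] := split_notin (σ :: s) r_gt0.
rewrite !inE !negb_or => /andP[u1σ u1s] /andP[u2σ u2s].
have u2_gt0 : 0 < u2 := lt_trans u1_gt0 u12.
have padded : \sum_(u <- [:: u1, u2 & s]) f (u, a) = 1.
  apply: sum_weight_atom_eq1.
  - by rewrite /= !inE negb_or lt_eqF // u1s u2s.
  - by move=> u /[!inE] /or3P[/eqP-> | /eqP-> | /s_gt0].
  - by rewrite !big_cons -/σ; lra.
have merged : \sum_(u <- [:: σ; u1; u2]) f (u, a) = 1.
  apply: sum_weight_atom_eq1.
  - have [σu1 σu2] : σ != u1 /\ σ != u2 by rewrite !(eq_sym σ).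
    by rewrite /= !inE !negb_or σu1 σu2 lt_eqF.
  - by move=> u /[!inE] /or3P[/eqP-> | /eqP-> | /eqP->].
  - by rewrite !big_cons big_nil; lra.
by move: padded merged; rewrite !big_cons big_nil; lra.
Qed.

Lemma weightD (x y : R) : 0 < x -> 0 < y -> x + y <= 1 ->
  f (x + y, a) = f (x, a) + f (y, a).
Proof.
move=> x_gt0 y_gt0 xy_le1.
have [u1 [u2 [/andP[u1_gt0 u12] u12_y]]] := split_notin [:: x] y_gt0.
rewrite !inE => u1x u2x.
have u2_gt0 : 0 < u2 := lt_trans u1_gt0 u12.
have pair : f (u1, a) + f (u2, a) = f (u1 + u2, a).
  have := sum_weight_atom (s := [:: u1; u2]).
  rewrite !big_cons !big_nil !addr0; apply.
  - by rewrite /= !inE lt_eqF.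
  - by move=> u /[!inE] /orP[/eqP-> | /eqP->].
  - by apply/andP; split; lra.
have triple : f (x, a) + (f (u1, a) + f (u2, a)) = f (x + (u1 + u2), a).
  have := sum_weight_atom (s := [:: x; u1; u2]).
  rewrite !big_cons !big_nil !addr0; apply.
  - have [xu1 xu2] : x != u1 /\ x != u2 by rewrite !(eq_sym x).
    by rewrite /= !inE !negb_or xu1 xu2 lt_eqF.
  - by move=> u /[!inE] /or3P[/eqP-> | /eqP-> | /eqP->].
  - by apply/andP; split; lra.
by rewrite -u12_y -triple pair.
Qed.

Lemma weight_le (x y : R) : 0 < x -> x <= y -> y <= 1 -> f (x, a) <= f (y, a).
Proof.
move=> x_gt0; rewrite le_eqVlt => /orP[/eqP-> // | xy] y_le1.
have d_gt0 : 0 < y - x by rewrite subr_gt0.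
have := weightD x_gt0 d_gt0; rewrite addrC subrK => /(_ y_le1) ->.
by rewrite lerDl weight_ge0 //; apply/andP; split; lra.
Qed.

Lemma weight_mulrn (x : R) (n : nat) : 0 < x -> x *+ n.+1 <= 1 ->
  f (x *+ n.+1, a) = f (x, a) *+ n.+1.
Proof.
move=> x_gt0; elim: n => [// | n IH] xn_le1.
have xn_gt0 : 0 < x *+ n.+1 by rewrite mulrn_wgt0.
rewrite mulrSr in xn_le1 *.
by rewrite weightD // IH ?mulrSr //; lra.
Qed.

Lemma weight_frac (k N : nat) : (0 < k <= N)%N ->
  f (k%:R / N%:R, a) = k%:R / N%:R.
Proof.
case: k => // k /andP[_]; case: N => // n kn.
have N_neq0 : n.+1%:R != 0 :> R by rewrite pnatr_eq0.
have inv_gt0 : 0 < n.+1%:R^-1 :> R by rewrite invr_gt0 ltr0Sn.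
have weight_inv : f (n.+1%:R^-1, a) = n.+1%:R^-1.
  have := weight_mulrn (n := n) inv_gt0.
  rewrite -(mulr_natr n.+1%:R^-1) mulVf // weight1 => /(_ (lexx _)) h.
  by apply: (mulIf N_neq0) => /=; rewrite mulVf // mulr_natr -h.
rewrite mulr_natl weight_mulrn // ?weight_inv // -(mulr_natl _ k.+1).
by rewrite ler_pdivrMr ?ltr0Sn // mul1r ler_nat.
Qed.

Lemma frac_le_weight (k N : nat) (t : R) : (k <= N)%N ->
  k%:R / N%:R <= t -> 0 < t <= 1 -> k%:R / N%:R <= f (t, a).
Proof.
case: k => [|k] kN kt /andP[t_gt0 t_le1]; first by rewrite mul0r weight_ge0 ?t_gt0.
rewrite -[X in X <= _]weight_frac ?kN // weight_le //.
by rewrite divr_gt0 ?ltr0n // (leq_trans _ kN).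
Qed.

Lemma weight_le_frac (k N : nat) (t : R) : (k <= N)%N -> 0 < t ->
  t <= k%:R / N%:R -> f (t, a) <= k%:R / N%:R.
Proof.
case: k => [|k] kN t_gt0 tk; first by move: tk; rewrite mul0r; lra.
have N_gt0 : (0 < N)%N by apply: leq_trans kN.
rewrite -[X in _ <= X]weight_frac ?kN // weight_le //.
by rewrite ler_pdivrMr ?ltr0n // mul1r ler_nat.
Qed.

Lemma weight_dist_le_invn (N : nat) (t : R) : (0 < N)%N -> 0 < t < 1 ->
  `|f (t, a) - t| <= N%:R^-1.
Proof.
move=> N_gt0 /andP[t_gt0 t_lt1].
have N_gtr0 : 0 < N%:R :> R by rewrite ltr0n.
have /andP[kl ku] := truncn_itv (mulr_ge0 (ltW t_gt0) (ltW N_gtr0)).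
set k := Num.truncn (t * N%:R) in kl ku.
have kN : (k < N)%N.
  by rewrite -(ltr_nat R); apply: (le_lt_trans kl); rewrite gtr_pMl.
have kt : k%:R / N%:R <= t by rewrite ler_pdivrMr.
have tk : t <= k.+1%:R / N%:R by rewrite ler_pdivlMr // (ltW ku).
have lo : k%:R / N%:R <= f (t, a).
  by apply: frac_le_weight; [exact: ltnW | | rewrite t_gt0 (ltW t_lt1)].
have hi : f (t, a) <= k.+1%:R / N%:R by exact: weight_le_frac.
move: lo hi kt tk; rewrite -natr1 mulrDl mul1r ler_norml; lra.
Qed.

Lemma weight_id (t : R) : 0 < t <= 1 -> f (t, a) = t.
Proof.
move=> /andP[t_gt0]; rewrite le_eqVlt => /orP[/eqP-> | t_lt1]; first exact: weight1.
apply/eqP; rewrite -subr_eq0 -normr_le0; apply/ler_addgt0Pr => e e_gt0.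
set N := (Num.truncn e^-1).+1.
have invN_lt : N%:R^-1 < e.
  by rewrite invf_plt ?posrE ?ltr0n //; exact: real_truncnS_gt (num_real _).
rewrite add0r (le_trans _ (ltW invN_lt)) //.
by apply: weight_dist_le_invn; rewrite // t_gt0 t_lt1.
Qed.

End ProbWeight.

Theorem theorem1p11 (R : realType) (V : lmodType R) (K : set V)
    (hK : convex_set (K : set (convex_lmodType V))) :
  prob_weight K (fun x : R * V => x.1) /\
  (forall f : R * V -> R, prob_weight K f ->
     forall x : R * V, outcome K x -> f x = x.1).
Proof.
split.
- split=> [x [/andP[x_gt0 x_le1] _] | E []//].
  by rewrite (ltW x_gt0) x_le1.
- by move=> f hf [t a] [/= t01 Ka]; exact: (weight_id hf Ka t01).
Qed.
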